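(* Let $n\ge3$. For an SSM-recurrent configuration $c$ on $W_n$ with $\Phi_W(c)=(\mathcal O,M)$, let $S(\Phi_W(c))$ be the subgraph of $C_n$ whose vertex set is $\{i\in[n]: \text{the edge }\{i,i+1\}\text{ is directed } i+1\to i \text{ in } \mathcal O\}$ and whose edge set is $\{\{i-1,i\}: i\in M\}$. Then $c\mapsto S(\Phi_W(c))$ is a bijection from the set of SSM-recurrent configurations on $W_n$ onto $\mathrm{Sub}(C_n)$. Under this bijection, $\mathrm{level}(c)$ equals the number of edges of the subgraph, and $\mathrm{weight}^{01^*}(c)$ equals the number of vertices of $C_n$ not in the subgraph.
   Context: $C_n$: cycle on $[n]$ with edges $\{i,i+1\}$ (indices mod $n$, vertices clockwise); $W_n$: $C_n$ plus sink $0$ adjacent to all of $[n]$. $\mathrm{Sub}(C_n)$ is the set of subgraphs $(A,E_A)$ with $A\subseteq[n]$ non-empty and $E_A$ a set of edges of $C_n$ with both endpoints in $A$. Stable configurations on $W_n$: $\{0,1,2\}^n$. SSM (parameter $p\in(0,1)$: a toppling vertex sends a grain to each neighbour independently with probability $p$, grains to the sink vanish); Markov chain: add a grain at a random vertex, stabilise; SSM-recurrent = recurrent state; known: stable $c$ is SSM-recurrent iff for all $i,j$ with $c_i=c_j=0$ some $k\in(i,j)$ has $c_k=2$, $(i,j)$ being the vertices strictly between $i$ and $j$ clockwise from $i$ ($(i,i)=[n]\setminus\{i\}$). $\mathrm{level}(c)=\sum_i c_i-n$. Cyclically first maximal vertex: $c_i=2$ and some $j$ has $c_j=0$ and $c_k=1$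 for all $k\in(j,i)$. $m(c)$: $m(c)_i=0$ if $c_i=0$, $2$ if $i$ cyclically first maximal, $1$ otherwise. For $c'=m(c)$, $\mathcal O(c')$ is the unique orientation of $C_n$ with in-degree $c'_i$ at each $i$ if $c'\ne(1,\ldots,1)$, and the counter-clockwise cycle ($i+1\to i$ for all $i$) otherwise. $\Phi_W(c)=(\mathcal O(m(c)),M)$ with $M$ the set of $i$ with $c_i=2$ not cyclically first maximal. $\mathrm{weight}^{01^*}(c)$ is the number of vertices $i$ such that $c_i=0$, or $c_i=1$ and there is $j$ with $c_j=0$ and $c_k=1$ for all $k$ in the clockwise half-open interval $(j,i]$. *)

From mathcomp Require Import all_boot all_algebra.
Set Implicit Arguments. Unset Strict Implicit. Unset Printing Implicit Defensive.

(* Vertices of C_n are 'I_n = {0,..,n-1} (standing for [n]), clockwise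
   successor ordS (i |-> i+1 mod n), predecessor ord_pred. *)

Section Wheel.
Variable n : nat.

(* stable configurations on W_n : values in {0,1,2} *)
Definition config := {ffun 'I_n -> 'I_3}.

Definition cdist (i k : 'I_n) : nat := (k + n - i) %% n.
Definition cspan (i j : 'I_n) : nat := if i == j then n else cdist i j.
(* k in (i,j): strictly between i and j clockwise from i; (i,i) = [n]\{i} *)
Definition in_open (i j k : 'I_n) : bool :=
  (0 < cdist i k) && (cdist i k < cspan i j).
Definition in_ohalf (j i k : 'I_n) : bool :=
  (0 < cdist j k) && (cdist j k <= cspan j i).

(* SSM-recurrence, via the known characterisation *)
Definition ssm_recurrent (c : config) : bool :=
  [forall i, forall j, ((c i == 0 :> nat) && (c j == 0 :> nat)) ==>
     [exists k, in_open i j k && (c k == 2 :> nat)]].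

Definition level (c : config) : int := (\sum_i (c i : nat))%:Z - n%:Z.

Definition first_max (c : config) (i : 'I_n) : bool :=
  (c i == 2 :> nat) &&
  [exists j, (c j == 0 :> nat) && [forall k, in_open j i k ==> (c k == 1 :> nat)]].

Definition mconf (c : config) (i : 'I_n) : nat :=
  if c i == 0 :> nat then 0 else if first_max c i then 2 else 1.

(* Orientation of C_n: o i = true iff edge {i,i+1} is directed i+1 -> i. *)
Definition orientation := {ffun 'I_n -> bool}.
Definition indeg (o : orientation) (i : 'I_n) : nat :=
  (o i : nat) + (~~ o (ord_pred i) : nat).

Definition orient (c' : 'I_n -> nat) : orientation :=
  if [forall i, c' i == 1] then [ffun => true]
  else odflt [ffun => true] [pick o : orientation | [forall i, indeg o i == c' i]].

Definition Mset (c : config) : {set 'I_n} :=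
  [set i | (c i == 2 :> nat) && ~~ first_max c i].

Definition PhiW (c : config) : orientation * {set 'I_n} :=
  (orient (mconf c), Mset c).

Definition cedge (i : 'I_n) : {set 'I_n} := [set i; ordS i].

Definition subgraph := ({set 'I_n} * {set {set 'I_n}})%type.

Definition is_sub (G : subgraph) : bool :=
  [&& G.1 != set0, G.2 \subset [set cedge i | i : 'I_n] &
      [forall e in G.2, e \subset G.1]].

Definition Sof (p : orientation * {set 'I_n}) : subgraph :=
  ([set i | p.1 i], [set cedge (ord_pred i) | i in p.2]).

Definition weight01 (c : config) : nat :=
  #|[set i | (c i == 0 :> nat) ||
       ((c i == 1 :> nat) &&
        [exists j, (c j == 0 :> nat) &&
           [forall k, in_ohalf j i k ==> (c k == 1 :> nat)]])]|.

End Wheel.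

From mathcomp Require Import all_boot all_algebra zify.
Set Implicit Arguments. Unset Strict Implicit. Unset Printing Implicit Defensive.
Import GRing.Theory.

(* Say that [ends01 c i] holds when the word read clockwise up to [i] ends with
   a factor 0 1^*; these are the vertices counted by weight^{01*}.  Going
   clockwise, this property is entered at every 0, kept across every 1 and
   lost at every 2, and a 2 is cyclically first maximal exactly when its
   predecessor has it; recurrence says that the predecessor of a 0 never has
   it.  Hence directing {i, i+1} as i+1 -> i exactly when [~~ ends01 c i]
   gives in-degrees m(c), so the vertex set V of S(Phi_W(c)) is the set of
   vertices without the property, and c_i = [i in V] + [i-1 notin V] + [i in M]
   recovers c from the subgraph; summing over i gives the level.  Conversely
   (A, E) is the image of c_i = [i in A] + [i-1 notin A] + [{i-1,i} in E],
   which is recurrent because a clockwise walk between two zeros re-enters A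
   at a vertex of value 2. *)

Section Cycle.
Variable n : nat.
Local Notation I := 'I_n.

Lemma ord_n_gt0 (i : I) : 0 < n.
Proof. exact: leq_ltn_trans (leq0n i) (ltn_ord i). Qed.

Definition cshift (i : I) (d : nat) : I := Ordinal (ltn_pmod (i + d) (ord_n_gt0 i)).

Lemma cdist_cshift (i : I) d : cdist i (cshift i d) = d %% n.
Proof.
rewrite /cdist /= -addnBA ?modnDml; last exact: ltnW.
have -> : i + d + (n - i) = d + n by have := ltn_ord i; lia.
by rewrite modnDr.
Qed.

Lemma cshift_cdist (i k : I) : cshift i (cdist i k) = k.
Proof.
apply: val_inj; rewrite /= /cdist modnDmr.
have -> : i + (k + n - i) = k + n by have := ltn_ord i; lia.
by rewrite modnDr modn_small.
Qed.

Lemma cshift0 (i : I) : cshift i 0 = i.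
Proof. by apply: val_inj; rewrite /= addn0 modn_small. Qed.

Lemma cshiftn (i : I) : cshift i n = i.
Proof. by apply: val_inj; rewrite /= modnDr modn_small. Qed.

Lemma ordS_cshift (i : I) d : ordS (cshift i d) = cshift i d.+1.
Proof. by apply: val_inj; rewrite /= -addn1 modnDml addn1 addnS. Qed.

Lemma ord_pred_cshiftS (i : I) d : ord_pred (cshift i d.+1) = cshift i d.
Proof. by rewrite -ordS_cshift ordSK. Qed.

Lemma cshift1 (i : I) : cshift i 1 = ordS i.
Proof. by rewrite -ordS_cshift cshift0. Qed.

Lemma cdist_lt (i k : I) : cdist i k < n.
Proof. exact: ltn_pmod (ord_n_gt0 i). Qed.

Lemma cdist_inj (i : I) : injective (cdist i).
Proof. by move=> k k' eq_kk'; rewrite -(cshift_cdist i k) eq_kk' cshift_cdist. Qed.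

Lemma cdist_id (i : I) : cdist i i = 0.
Proof. by rewrite -{2}(cshift0 i) cdist_cshift mod0n. Qed.

Lemma cdist_eq0 (i k : I) : (cdist i k == 0) = (k == i).
Proof. by rewrite -(cdist_id i) (inj_eq (@cdist_inj i)). Qed.

Lemma cshift_cspan (i j : I) : cshift i (cspan i j) = j.
Proof. by rewrite /cspan; case: eqP => [->|_]; rewrite ?cshiftn ?cshift_cdist. Qed.

Lemma cspan_gt0 (i j : I) : 0 < cspan i j.
Proof.
rewrite /cspan; case: eqP => [_|/eqP ij]; first exact: ord_n_gt0 i.
by rewrite lt0n cdist_eq0 eq_sym.
Qed.

Lemma cspan_le (i j : I) : cspan i j <= n.
Proof. by rewrite /cspan; case: eqP => // _; rewrite ltnW ?cdist_lt. Qed.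

Lemma cspan_ordS (j p : I) : p != j -> cspan j (ordS p) = (cdist j p).+1.
Proof.
move=> pj; have ordS_p : ordS p = cshift j (cdist j p).+1 by rewrite -ordS_cshift cshift_cdist.
rewrite /cspan ordS_p; case: eqP => [j_eq|j_neq].
  have := cdist_lt j p; rewrite leq_eqVlt => /orP [/eqP //|lt_pn].
  by move: (congr1 (cdist j) j_eq); rewrite cdist_cshift modn_small // cdist_id.
rewrite cdist_cshift modn_small // ltn_neqAle cdist_lt andbT.
by apply/eqP => eq_n; apply: j_neq; rewrite eq_n cshiftn.
Qed.

Lemma cycle_ind (P : pred I) (i0 : I) :
  (forall i, P i -> P (ordS i)) -> P i0 -> forall j, P j.
Proof.
move=> PS Pi0 j; rewrite -(cshift_cdist i0 j); elim: (cdist i0 j) => [|d IHd].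
  by rewrite cshift0.
by rewrite -ordS_cshift; apply: PS.
Qed.

Lemma cycle_ind_pred (P : pred I) (i0 : I) :
  (forall i, P (ordS i) -> P i) -> P i0 -> forall j, P j.
Proof.
move=> PS Pi0 j; apply: contraT => notPj.
have notPS i : ~~ P i -> ~~ P (ordS i) by apply: contra; apply: PS.
by have := @cycle_ind (predC P) j notPS notPj i0; rewrite /= Pi0.
Qed.

Lemma in_ohalfE (j i k : I) : j != i -> in_ohalf j i k = in_open j i k || (k == i).
Proof.
move=> ji; rewrite /in_ohalf /in_open /cspan (negbTE ji).
have [->|ki] := eqVneq k i; first by rewrite leqnn orbT andbT lt0n cdist_eq0 eq_sym.
by rewrite orbF [cdist j k <= _]leq_eqVlt (inj_eq (@cdist_inj j)) (negbTE ki).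
Qed.

Lemma in_ohalf_end (j i : I) : j != i -> in_ohalf j i i.
Proof. by move=> ji; rewrite in_ohalfE // eqxx orbT. Qed.

Lemma in_open_ohalf_pred (j i k : I) :
  j != ord_pred i -> in_open j i k = in_ohalf j (ord_pred i) k.
Proof.
move=> j_neq; rewrite /in_open /in_ohalf.
by rewrite -{1}(ord_predK i) cspan_ordS 1?eq_sym // ltnS /cspan (negbTE j_neq).
Qed.

Hypothesis n_gt1 : 1 < n.

Lemma cdist_pred (i : I) : cdist (ord_pred i) i = 1.
Proof. by rewrite -{2}(ord_predK i) -cshift1 cdist_cshift modn_small. Qed.

Lemma ord_pred_neq (i : I) : ord_pred i != i.
Proof. by rewrite eq_sym -cdist_eq0 cdist_pred. Qed.

Lemma in_open_pred (i k : I) : in_open (ord_pred i) i k = false.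
Proof.
by rewrite /in_open /cspan (negbTE (ord_pred_neq i)) cdist_pred; case: (cdist _ _).
Qed.

End Cycle.

Section Orientation.
Variable n : nat.
Implicit Types (o : orientation n) (i : 'I_n).

Lemma eq_orientation_indeg o1 o2 :
  (forall i, indeg o1 i = indeg o2 i) -> (exists i, indeg o1 i != 1) -> o1 = o2.
Proof.
move=> eq_indeg [i0 indeg_i0]; apply/ffunP => i1; apply/eqP; apply: contraT => neq_i1.
have back i : o1 (ordS i) != o2 (ordS i) -> (o1 i != o2 i) && (o1 i == o1 (ordS i)).
  have := eq_indeg (ordS i); rewrite /indeg ordSK.
  by case: (o1 i); case: (o2 i); case: (o1 (ordS i)); case: (o2 (ordS i)).
have neq_all : forall i, o1 i != o2 i.
  by apply: (cycle_ind_pred (P := fun i => o1 i != o2 i) _ neq_i1) => i /back /andP [].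
have /back /andP [_ /eqP const] : o1 (ordS (ord_pred i0)) != o2 (ordS (ord_pred i0)).
  by rewrite ord_predK neq_all.
by move: indeg_i0; rewrite /indeg const ord_predK addnC addn_negb.
Qed.

Lemma orient_indeg (d : 'I_n -> nat) o :
  (forall i, indeg o i = d i) -> ((forall i, d i = 1) -> o = [ffun => true]) ->
  orient d = o.
Proof.
move=> o_d all1; rewrite /orient; case: ifP => [/forallP d1 | /negbT not_all1].
  by rewrite all1 // => i; apply/eqP.
case: pickP => [o' /forallP o'_d | /(_ o) /negbT /negP no_o] /=; last first.
  by case: no_o; apply/forallP => i; rewrite o_d.
apply: eq_orientation_indeg => [i|]; first by rewrite (eqP (o'_d i)) o_d.
by move: not_all1; rewrite negb_forall => /existsP [i d_i]; exists i; rewrite (eqP (o'_d i)).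
Qed.

Lemma sum_indeg o : \sum_i indeg o i = n.
Proof.
rewrite big_split /= [X in _ + X](reindex_inj (@ordS_inj n)) -big_split /=.
under eq_bigr => i _ do rewrite ordSK addnC addn_negb.
by rewrite sum_nat_const card_ord muln1.
Qed.

End Orientation.

Section Recurrent.
Variable n : nat.
Hypothesis n_gt1 : 1 < n.
Implicit Types (c : config n) (i j k : 'I_n).

Definition ends01 c i : bool :=
  (c i == 0 :> nat) ||
  ((c i == 1 :> nat) &&
   [exists j, (c j == 0 :> nat) && [forall k, in_ohalf j i k ==> (c k == 1 :> nat)]]).

Lemma ends01_has_zero c i : ends01 c i -> exists j, c j == 0 :> nat.
Proof. by case/orP => [ci0|/andP [_ /existsP [j /andP [cj0 _]]]]; [exists i | exists j]. Qed.

Lemma ends01_pred c i : ends01 c (ord_pred i) =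
  [exists j, (c j == 0 :> nat) && [forall k, in_open j i k ==> (c k == 1 :> nat)]].
Proof.
rewrite /ends01; apply/idP/existsP => [|[j /andP [cj0 /forallP cj1]]].
  case/orP => [c0 | /andP [c1 /existsP [j /andP [cj0 /forallP cj1]]]].
    by exists (ord_pred i); rewrite c0; apply/forallP => k; rewrite in_open_pred.
  have jP : j != ord_pred i by apply: contraTneq cj0 => ->; rewrite (eqP c1).
  by exists j; rewrite cj0; apply/forallP => k; rewrite in_open_ohalf_pred.
have [<-|jP] := eqVneq j (ord_pred i); first by rewrite cj0.
apply/orP; right; rewrite (implyP (cj1 _)) ?in_open_ohalf_pred ?in_ohalf_end //=.
by apply/existsP; exists j; rewrite cj0; apply/forallP => k; rewrite -in_open_ohalf_pred.
Qed.

Lemma ends01_one c i : c i == 1 :> nat -> ends01 c i = ends01 c (ord_pred i).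
Proof.
move=> c1; rewrite ends01_pred /ends01 c1 (eqP c1) /=.
apply: eq_existsb => j; case: (boolP (c j == 0 :> nat)) => //= cj0.
have ji : j != i by apply: contraTneq cj0 => ->; rewrite (eqP c1).
apply: eq_forallb => k; rewrite in_ohalfE //.
by have [->|_] := eqVneq k i; rewrite ?orbT ?orbF ?c1 ?implybT.
Qed.

Lemma first_max_ends01 c i : c i == 2 :> nat -> first_max c i = ends01 c (ord_pred i).
Proof. by move=> c2; rewrite /first_max c2 ends01_pred. Qed.

Lemma recurrent_zero c i :
  ssm_recurrent c -> c i == 0 :> nat -> ~~ ends01 c (ord_pred i).
Proof.
move=> /forallP rec ci0; rewrite ends01_pred; apply/existsP => [[j /andP [cj0 /forallP cj1]]].
have /existsP [k /andP [jik ck2]] := implyP (forallP (rec j) i) (introT andP (conj cj0 ci0)).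
by move: (implyP (cj1 k) jik); rewrite (eqP ck2).
Qed.

Definition orient01 c : orientation n := [ffun i => ~~ ends01 c i].

Lemma indeg_orient01 c i : ssm_recurrent c -> indeg (orient01 c) i = mconf c i.
Proof.
move=> rec; rewrite /indeg !ffunE negbK /mconf.
have := ltn_ord (c i); case ci: (nat_of_ord (c i)) => [|[|[|//]]] _ /=.
- by rewrite (negbTE (recurrent_zero rec _)) ?ci // /ends01 ci.
- by rewrite -ends01_one ?ci // /first_max ci addn_negb.
- by rewrite first_max_ends01 ?ci // [ends01 c i]/ends01 ci; case: ends01.
Qed.

Lemma orient_mconf c : ssm_recurrent c -> orient (mconf c) = orient01 c.
Proof.
move=> rec; apply: orient_indeg => [i|all1]; first exact: indeg_orient01.
apply/ffunP => i; rewrite !ffunE; apply/negP => /ends01_has_zero [j cj0].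
by have := all1 j; rewrite /mconf cj0.
Qed.

Lemma config_mconf_Mset c i : (c i : nat) = mconf c i + (i \in Mset c).
Proof.
rewrite /mconf /Mset inE.
have := ltn_ord (c i); case ci: (nat_of_ord (c i)) => [|[|[|//]]] _ //=.
  by rewrite /first_max ci.
by rewrite /first_max ci; case: [exists _, _].
Qed.

Lemma Sof_PhiW_vertices c : ssm_recurrent c -> (Sof (PhiW c)).1 = [set i | ~~ ends01 c i].
Proof. by move=> rec; apply/setP => i; rewrite /Sof /PhiW !inE orient_mconf // ffunE. Qed.


Lemma config_PhiW c i :
  ssm_recurrent c -> (c i : nat) = indeg (PhiW c).1 i + (i \in (PhiW c).2).
Proof. by move=> rec; rewrite config_mconf_Mset /= orient_mconf // indeg_orient01. Qed.

Lemma PhiW_inj c1 c2 : ssm_recurrent c1 -> ssm_recurrent c2 -> PhiW c1 = PhiW c2 -> c1 = c2.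
Proof.
move=> rec1 rec2 eq_PhiW; apply/ffunP => i; apply: val_inj.
by rewrite /= !config_PhiW // eq_PhiW.
Qed.

Lemma level_PhiW c : ssm_recurrent c -> level c = #|(PhiW c).2|.
Proof.
move=> rec; rewrite /level; have -> : \sum_i (c i : nat) = n + #|(PhiW c).2|.
  rewrite (eq_bigr _ (fun i _ => config_PhiW i rec)) big_split /= sum_indeg -sum1_card.
  by rewrite [X in _ = _ + X]big_mkcond; congr (_ + _); apply: eq_bigr => i _; case: (_ \in _).
by rewrite PoszD addrC addKr.
Qed.

Lemma weight01_Sof_PhiW c : ssm_recurrent c -> weight01 c = #|~: (Sof (PhiW c)).1|.
Proof.
by move=> rec; rewrite Sof_PhiW_vertices //; apply: eq_card => i; rewrite !inE negbK.
Qed.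

Lemma is_sub_Sof_PhiW c : ssm_recurrent c -> is_sub (Sof (PhiW c)).
Proof.
move=> rec; apply/and3P; split.
- rewrite Sof_PhiW_vertices //; apply/set0Pn.
  have [i not_ends01|all_ends01] := pickP (fun i => ~~ ends01 c i); first by exists i; rewrite inE.
  have i0 : 'I_n := Ordinal (ltnW n_gt1).
  have [z cz0] := ends01_has_zero (negbFE (all_ends01 i0)).
  by have := all_ends01 (ord_pred z); rewrite /= (recurrent_zero rec cz0).
- by apply/subsetP => _ /imsetP [i _ ->]; apply/imsetP; exists (ord_pred i).
- apply/forallP => e; apply/implyP => /imsetP [i]; rewrite inE => /andP [ci2 not_first] ->.
  rewrite Sof_PhiW_vertices //; apply/subsetP => k.
  rewrite /cedge !inE ord_predK => /orP [/eqP -> | /eqP ->].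
    by rewrite -first_max_ends01.
  by rewrite /ends01 (eqP ci2).
Qed.

End Recurrent.

Section SubgraphEncoding.
Variable n : nat.
Hypothesis n_gt2 : 2 < n.

Lemma cedge_pred_inj : injective (fun i : 'I_n => cedge (ord_pred i)).
Proof.
move=> i j /= eq_ij; apply: ord_pred_inj; move: (ord_pred i) (ord_pred j) eq_ij => p q eq_pq.
have : p \in cedge q by rewrite -eq_pq !inE eqxx.
have : q \in cedge p by rewrite eq_pq !inE eqxx.
rewrite !inE => /orP [/eqP // | /eqP qSp] /orP [/eqP // | /eqP pSq].
have : cdist q (cshift q 2) = 2 by rewrite cdist_cshift modn_small.
by rewrite -ordS_cshift cshift1 -pSq -qSp cdist_id.
Qed.

Lemma Sof_inj : injective (@Sof n).
Proof.
move=> [o M] [o' M'] [/setP eq_o /(imset_inj cedge_pred_inj) ->]; congr pair.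
by apply/ffunP => i; have := eq_o i; rewrite !inE.
Qed.

End SubgraphEncoding.

Section SubgraphConfig.
Variables (n : nat) (G : subgraph n).
Hypotheses (n_gt1 : 1 < n) (subG : is_sub G).
Local Notation A := G.1.
Local Notation E := G.2.
Implicit Types i : 'I_n.

Lemma sub_edge i : cedge (ord_pred i) \in E -> (ord_pred i \in A) && (i \in A).
Proof.
case/and3P: subG => _ _ /forallP /(_ (cedge (ord_pred i))) /implyP sub_e /sub_e /subsetP sub_A.
by rewrite !sub_A // !inE ?ord_predK eqxx ?orbT.
Qed.

Definition sub_value i : nat :=
  (i \in A) + (ord_pred i \notin A) + (cedge (ord_pred i) \in E).

Lemma sub_value_lt3 i : sub_value i < 3.
Proof.
rewrite /sub_value; case: (boolP (_ \in E)) => [/sub_edge /andP [-> ->] // | _].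
by case: (i \in A); case: (ord_pred i \in A).
Qed.

Definition sub_config : config n := [ffun i => inord (sub_value i)].

Lemma sub_configE i : (sub_config i : nat) = sub_value i.
Proof. by rewrite ffunE inordK // sub_value_lt3. Qed.

Lemma sub_config0 i : (sub_config i == 0 :> nat) = (i \notin A) && (ord_pred i \in A).
Proof.
rewrite sub_configE /sub_value; case: (boolP (_ \in E)) => [/sub_edge /andP [-> ->] // | _].
by case: (i \in A); case: (ord_pred i \in A).
Qed.

Lemma sub_config1 i : sub_config i == 1 :> nat -> (i \in A) = (ord_pred i \in A).
Proof.
rewrite sub_configE /sub_value; case: (boolP (_ \in E)) => [/sub_edge /andP [-> ->] // | _].
by case: (i \in A); case: (ord_pred i \in A).
Qed.

Lemma sub_config2 i : (sub_config i == 2 :> nat) =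
  (i \in A) && (ord_pred i \notin A) || (cedge (ord_pred i) \in E).
Proof.
rewrite sub_configE /sub_value; case: (boolP (_ \in E)) => [/sub_edge /andP [-> ->] // | _].
by case: (i \in A); case: (ord_pred i \in A).
Qed.

Lemma ends01_sub_config i : ends01 sub_config i = (i \notin A).
Proof.
(* A mismatch can only sit on a 1 preceded by a mismatch, so a single one would
   make the configuration constantly 1, and then no vertex has [ends01]. *)
pose mismatch i := ends01 sub_config i != (i \notin A).
have mismatch_pred j : mismatch j -> (sub_config j == 1 :> nat) && mismatch (ord_pred j).
  rewrite /mismatch; have := ltn_ord (sub_config j).
  case cj: (nat_of_ord (sub_config j)) => [|[|[|//]]] _ /=.
  - have /[!sub_config0] /andP [-> _] : sub_config j == 0 :> nat by rewrite cj.
    by rewrite /ends01 cj.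
  - by rewrite ends01_one ?cj // sub_config1 ?cj.
  - have /[!sub_config2] : sub_config j == 2 :> nat by rewrite cj.
    by case/orP => [/andP [-> _] | /sub_edge /andP [_ ->]]; rewrite /ends01 cj.
apply/eqP; apply: contraT => mismatch_i.
have mismatch_all : forall j, mismatch j.
  by apply: (cycle_ind_pred _ mismatch_i) => j /mismatch_pred /andP []; rewrite ordSK.
have ones j : sub_config j == 1 :> nat by case/andP: (mismatch_pred j (mismatch_all j)).
case/and3P: subG => /set0Pn [x xA] _ _.
have := mismatch_all x; rewrite /mismatch xA.
case: (boolP (ends01 _ x)) => // /ends01_has_zero [j cj0] _.
by rewrite (eqP (ones j)) in cj0.
Qed.

Lemma first_max_sub_config i :
  first_max sub_config i = (sub_config i == 2 :> nat) && (ord_pred i \notin A).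
Proof.
have [ci2|ci_neq2] := boolP (sub_config i == 2 :> nat).
  by rewrite first_max_ends01 // ends01_sub_config.
by rewrite /first_max (negbTE ci_neq2).
Qed.

Lemma mconf_sub_config i : mconf sub_config i = indeg [ffun i => i \in A] i.
Proof.
rewrite /mconf first_max_sub_config sub_config0 sub_config2 /indeg !ffunE.
case: (boolP (_ \in E)) => [/sub_edge /andP [-> ->] // | _].
by case: (i \in A); case: (ord_pred i \in A).
Qed.

Lemma orient_sub_config : orient (mconf sub_config) = [ffun i => i \in A].
Proof.
apply: orient_indeg => [i|all1]; first by rewrite mconf_sub_config.
have closed i : i \in A -> ordS i \in A.
  move=> iA; have := all1 (ordS i).
  by rewrite mconf_sub_config /indeg !ffunE ordSK iA; case: (_ \in A).
case/and3P: subG => /set0Pn [x xA] _ _.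
by apply/ffunP => i; rewrite !ffunE (cycle_ind closed xA).
Qed.

Lemma Mset_sub_config : Mset sub_config = [set i | cedge (ord_pred i) \in E].
Proof.
apply/setP => i; rewrite !inE first_max_sub_config sub_config2.
case: (boolP (_ \in E)) => [/sub_edge /andP [-> ->] // | _].
by case: (i \in A); case: (ord_pred i \in A).
Qed.

Lemma Sof_PhiW_sub_config : Sof (PhiW sub_config) = G.
Proof.
rewrite [RHS]surjective_pairing /Sof /PhiW /= orient_sub_config Mset_sub_config.
congr pair; first by apply/setP => i; rewrite !inE ffunE.
apply/setP => e; apply/imsetP/idP => [[i] | eE]; first by rewrite inE => iE ->.
case/and3P: subG => _ /subsetP /(_ e eE) /imsetP [i _ e_def] _.
by exists (ordS i); rewrite ?inE ordSK -?e_def.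
Qed.

Lemma sub_config_recurrent : ssm_recurrent sub_config.
Proof.
apply/forallP => i; apply/forallP => j; apply/implyP.
rewrite !sub_config0 => /andP [/andP [iNA _] /andP [_ pjA]].
pose inA d := cshift i d \in A.
have inA_last : inA (cspan i j).-1.
  by rewrite /inA -ord_pred_cshiftS prednK ?cspan_gt0 // cshift_cspan.
case: (ex_minnP (ex_intro inA _ inA_last)) => d inA_d d_min.
have d_gt0 : 0 < d by case: d inA_d {d_min} => //; rewrite /inA cshift0 (negbTE iNA).
have d_lt : d < cspan i j.
  by rewrite -(prednK (cspan_gt0 i j)) ltnS d_min.
have Nd_pred : ~~ inA d.-1.
  by apply: contraTN d_gt0 => /d_min; lia.
apply/existsP; exists (cshift i d).
rewrite /in_open cdist_cshift modn_small ?d_gt0 ?d_lt; last exact: leq_trans d_lt (cspan_le i j).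
rewrite sub_config2 -{2}(prednK d_gt0) ord_pred_cshiftS.
by move: inA_d Nd_pred; rewrite /inA => -> ->.
Qed.

End SubgraphConfig.

Theorem mainTheorem7 (n : nat) (hn : 3 <= n) :
  let R := [set c : config n | ssm_recurrent c] in
  [/\ {in R &, injective (fun c => Sof (PhiW c))},
      (forall c, c \in R -> is_sub (Sof (PhiW c))),
      (forall G : subgraph n, is_sub G -> exists2 c, c \in R & Sof (PhiW c) = G) &
      (forall c, c \in R ->
         level c = Posz #|(Sof (PhiW c)).2| /\
         weight01 c = #|~: (Sof (PhiW c)).1|)].
Proof.
have n_gt1 : 1 < n := ltnW hn.
move=> R; split => [c1 c2 | c | G subG | c]; rewrite ?inE.
- by move=> rec1 rec2 /(Sof_inj hn); apply: PhiW_inj.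
- exact: is_sub_Sof_PhiW.
- exists (sub_config G); last exact: Sof_PhiW_sub_config.
  by rewrite inE sub_config_recurrent.
- move=> rec; split; last exact: weight01_Sof_PhiW.
  by rewrite level_PhiW // card_imset //; apply: cedge_pred_inj.
Qed.
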